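(* Fix a prior $\mu$ in the relative interior of $\Delta$ and suppose the updating rule respects the Blackwell order for $\mu$ and $\varphi=\varphi^{\mu}$ is continuous on $\Delta$. (a) If there are at least three states ($n\ge3$), then either there is $x^*\in\Delta$ with $\varphi(x)=x^*$ for all $x\in\Delta$, or $\varphi(x)=x$ for all $x\in\Delta$. (b) If there are two states ($n=2$), then the updating rule is occasionally coarse for $\mu$ with $\varphi(0)=a$ and $\varphi(1)=b$, i.e. there exist $0\le a\le b\le 1$ with $\varphi(x)=a$ for $x\in[0,a)$, $\varphi(x)=x$ for $x\in[a,b]$, and $\varphi(x)=b$ for $x\in(b,1]$.
   Context: Let $\Theta$ be a finite set of states, $|\Theta|=n\ge2$, and $\Delta=\Delta(\Theta)$ the simplex of beliefs, viewed as a subset of $\mathbb{R}^{n-1}$ with the Euclidean metric; for $n=2$, $\Theta=\{0,1\}$ and a belief is identified with the probability of state $1$, so $\Delta=[0,1]$. An experiment $\pi:\Theta\to\Delta(S)$ ($S$ finite) with prior $\mu$ induces the Bayesian distribution over posteriors $\rho_B$, a finitely supported distribution on $\Delta$ with mean $\mu$ (every such distribution arises from some experiment). Blackwell order: $\pi\succeq\pi'$ iff $\rho_B'$ is a mean-preserving contraction of $\rho_B$. An updating rule is given, for each prior $\mu$, by a distortion function $\varphi^{\mu}:\Delta\to\Delta$: when the Bayesian posterior is $x$, the decision maker holds belief $\varphi^{\mu}(x)$. For a compact action set $A$, continuous $u:A\times\Theta\to\mathbb{R}$, and consistent choice $a^*:\Delta\to A$ (i.e. $a^*(y)\in\arg\max_{a}\mathbb{E}_y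 u(a,\theta)$ for all $y$), let $W(x)=\mathbb{E}_x u(a^*(\varphi^{\mu}(x)),\theta)$. The rule respects the Blackwell order for $\mu$ if for all such $A,u,a^*$ and all $\pi\succeq\pi'$, $\mathbb{E}_{\rho_B}W\ge\mathbb{E}_{\rho_B'}W$. For $n=2$, occasionally coarse means: there exist $0\le a\le b\le1$ with $\varphi(x)=a$ for $x\in(0,a)$, $\varphi(x)=b$ for $x\in(b,1)$, $\varphi(x)=x$ for $x\in[a,b]$, $\varphi(0)\le a$, $\varphi(1)\ge b$. *)

From HB Require Import structures.
From mathcomp Require Import all_boot all_order all_algebra.
From mathcomp Require Import all_classical all_reals all_analysis.
Set Implicit Arguments. Unset Strict Implicit. Unset Printing Implicit Defensive.
Import Order.TTheory GRing.Theory Num.Theory.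
Import numFieldNormedType.Exports.
Local Open Scope classical_set_scope.
Local Open Scope ring_scope.

(* States: Theta = 'I_n.  Beliefs: row vectors 'rV[R]_n lying in the simplex.
   The topology on 'rV[R]_n is the (max-)norm topology, which coincides with
   the Euclidean one. *)

Definition simplex (R : realType) (n : nat) : set 'rV[R]_n :=
  [set x | (forall i, 0 <= x ord0 i) /\ \sum_i x ord0 i = 1].
Arguments simplex {R} n.

Definition rel_interior (R : realType) (n : nat) : set 'rV[R]_n :=
  [set x | simplex n x /\ forall i, 0 < x ord0 i].
Arguments rel_interior {R} n.

Definition experiment (R : realType) (n m : nat) (pi : 'I_n -> 'I_m -> R) :=
  (forall th s, 0 <= pi th s) /\ (forall th, \sum_s pi th s = 1).

(* Bayesian distribution over posteriors rho_B induced by (mu, pi):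
   signal s has probability sigprob and posterior post
   (post is irrelevant, and set by MathComp's x/0 = 0, when sigprob = 0). *)
Definition sigprob (R : realType) (n m : nat) (mu : 'rV[R]_n)
  (pi : 'I_n -> 'I_m -> R) (s : 'I_m) : R :=
  \sum_th mu ord0 th * pi th s.

Definition post (R : realType) (n m : nat) (mu : 'rV[R]_n)
  (pi : 'I_n -> 'I_m -> R) (s : 'I_m) : 'rV[R]_n :=
  \row_th (mu ord0 th * pi th s / sigprob mu pi s).

(* The finitely supported distribution (q_j, y_j)_j is a mean-preserving
   contraction of (p_i, x_i)_i : there is a coupling w with marginals p, q
   such that the conditional mean of x given y_j is y_j. *)
Definition mpc (R : realType) (n m m' : nat)
  (p : 'I_m -> R) (x : 'I_m -> 'rV[R]_n)
  (q : 'I_m' -> R) (y : 'I_m' -> 'rV[R]_n) : Prop :=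
  exists w : 'I_m -> 'I_m' -> R,
    [/\ forall i j, 0 <= w i j,
        forall i, \sum_j w i j = p i,
        forall j, \sum_i w i j = q j &
        forall j, \sum_i w i j *: x i = q j *: y j].

Definition blackwell_ge (R : realType) (n m m' : nat) (mu : 'rV[R]_n)
  (pi : 'I_n -> 'I_m -> R) (pi' : 'I_n -> 'I_m' -> R) : Prop :=
  mpc (sigprob mu pi) (post mu pi) (sigprob mu pi') (post mu pi').

Definition exp_util (R : realType) (n : nat) (V : Type) (u : V -> 'I_n -> R)
  (y : 'rV[R]_n) (a : V) : R := \sum_th y ord0 th * u a th.

(* A decision problem: compact (nonempty, by consistency) action set A in a
   normed space V (every compact metric space embeds isometrically in one),
   payoff u continuous on A x Theta (Theta finite discrete, so: continuous in
   the action for each state), and consistent choice astar. *)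
Definition consistent_choice (R : realType) (n : nat) (V : normedModType R)
  (A : set V) (u : V -> 'I_n -> R) (astar : 'rV[R]_n -> V) : Prop :=
  forall y, simplex n y ->
    A (astar y) /\ forall a, A a -> exp_util u y a <= exp_util u y (astar y).

Definition Wval (R : realType) (n : nat) (V : Type) (u : V -> 'I_n -> R)
  (astar : 'rV[R]_n -> V) (phi : 'rV[R]_n -> 'rV[R]_n) (x : 'rV[R]_n) : R :=
  exp_util u x (astar (phi x)).

Definition exp_W (R : realType) (n m : nat) (V : Type) (u : V -> 'I_n -> R)
  (astar : 'rV[R]_n -> V) (phi : 'rV[R]_n -> 'rV[R]_n)
  (mu : 'rV[R]_n) (pi : 'I_n -> 'I_m -> R) : R :=
  \sum_s sigprob mu pi s * Wval u astar phi (post mu pi s).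

Definition respects_blackwell (R : realType) (n : nat) (mu : 'rV[R]_n)
  (phi : 'rV[R]_n -> 'rV[R]_n) : Prop :=
  forall (V : normedModType R) (A : set V) (u : V -> 'I_n -> R)
         (astar : 'rV[R]_n -> V),
    compact A ->
    (forall th, {within A, continuous (fun a => u a th)}) ->
    consistent_choice A u astar ->
    forall (m m' : nat) (pi : 'I_n -> 'I_m -> R) (pi' : 'I_n -> 'I_m' -> R),
      experiment pi -> experiment pi' -> blackwell_ge mu pi pi' ->
      exp_W u astar phi mu pi' <= exp_W u astar phi mu pi.

From HB Require Import structures.
From mathcomp Require Import all_boot all_order all_algebra.
From mathcomp Require Import all_classical all_reals all_analysis.
From mathcomp Require Import ring lra.
Import Order.TTheory GRing.Theory Num.Theory.
Import numFieldNormedType.Exports.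
Local Open Scope classical_set_scope.
Local Open Scope ring_scope.
Set Implicit Arguments. Unset Strict Implicit. Unset Printing Implicit Defensive.

(* Fix a direction [w] and consider the decision maker who takes a risky action
   paying [w_theta] exactly when her distorted belief makes it profitable; at
   Bayesian posterior [x] she earns [H_w(x) = [w.phi(x) > 0] w.x].  Splitting a
   posterior into two is a Blackwell improvement, so respecting the Blackwell
   order makes [H_w] convex along segments of the simplex.  With continuity of
   [phi] this yields a crossing property: if some [x] has [w.x < 0 < w.phi(x)],
   then [w.phi(z) >= 0] whenever [w.z < 0]; affine functionals behave alike.

   With two states, crossings of the levels [x_1 = c] pin [phi] down to the
   occasionally coarse form with [a = phi(delta_0)_1] and [b = phi(delta_1)_1].
   With three or more states, suppose [phi(x0) = y0 <> x0].  If [z - y0] is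
   not parallel to [x0 - y0], the crossing property for all functionals with
   prescribed values on these two vectors forces [phi(z) - y0] into their span
   with zero coefficients.  Points on the line through [x0] and [y0] are limits
   of points off it, which exist as the simplex is at least two-dimensional. *)

Section Dot.
Variables (R : realType) (n : nat).
Implicit Types (u v w : 'rV[R]_n).

Definition dot u v : R := \sum_i u ord0 i * v ord0 i.

Lemma dotC u v : dot u v = dot v u.
Proof. by apply: eq_bigr => i _; rewrite mulrC. Qed.

Lemma dotDl u v w : dot (u + v) w = dot u w + dot v w.
Proof. by rewrite /dot -big_split; apply: eq_bigr => i _; rewrite mxE mulrDl. Qed.

Lemma dotZl (a : R) u v : dot (a *: u) v = a * dot u v.
Proof. by rewrite /dot mulr_sumr; apply: eq_bigr => i _; rewrite mxE mulrA. Qed.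

Lemma dotNl u v : dot (- u) v = - dot u v.
Proof. by rewrite -scaleN1r dotZl mulN1r. Qed.

Lemma dotBl u v w : dot (u - v) w = dot u w - dot v w.
Proof. by rewrite dotDl dotNl. Qed.

Lemma dotDr u v w : dot u (v + w) = dot u v + dot u w.
Proof. by rewrite !(dotC u) dotDl. Qed.

Lemma dotZr (a : R) u v : dot u (a *: v) = a * dot u v.
Proof. by rewrite !(dotC u) dotZl. Qed.

Lemma dotBr u v w : dot u (v - w) = dot u v - dot u w.
Proof. by rewrite !(dotC u) dotBl. Qed.

Lemma dot0r u : dot u 0 = 0.
Proof. by rewrite -(scale0r 0) dotZr mul0r. Qed.

Lemma dot_eq0 u : (dot u u == 0) = (u == 0).
Proof.
apply/idP/eqP => [|->]; last by rewrite dot0r.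
rewrite psumr_eq0 => [/allP u0|i _]; last by rewrite -expr2 sqr_ge0.
apply/rowP => i; have /implyP := u0 i (mem_index_enum i).
by rewrite mulf_eq0 orbb mxE => /(_ isT) /eqP.
Qed.

Lemma continuous_dot u : continuous (dot u).
Proof.
apply: (continuous_big add_continuous) => i _ v.
by apply: continuousM; [exact: cst_continuous | exact: coord_continuous].
Qed.

End Dot.

Section Simplex.
Variables (R : realType) (n : nat).
Implicit Types (w x y : 'rV[R]_n).

Lemma simplex_coord x i : simplex n x -> 0 <= x ord0 i <= 1.
Proof.
move=> [x_ge0 x_sum]; rewrite x_ge0 -x_sum (bigD1 i) //= lerDl.
exact: sumr_ge0.
Qed.

Lemma simplex_convex (t : R) x y : simplex n x -> simplex n y -> 0 <= t <= 1 ->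
  simplex n (t *: x + (1 - t) *: y).
Proof.
move=> [x_ge0 x_sum] [y_ge0 y_sum] /andP[t_ge0 t_le1]; split => [i|].
  by rewrite !mxE addr_ge0 ?mulr_ge0 ?subr_ge0.
under eq_bigr do rewrite !mxE.
by rewrite big_split -!mulr_sumr x_sum y_sum /=; lra.
Qed.

Lemma dot_add_const w (c : R) x : simplex n x ->
  dot (w + c *: const_mx 1) x = dot w x + c.
Proof.
move=> [_ x_sum]; rewrite dotDl dotZl; congr (_ + _).
rewrite /dot; under eq_bigr do rewrite mxE mul1r.
by rewrite x_sum mulr1.
Qed.

Definition vertex (k : 'I_n) : 'rV[R]_n := delta_mx ord0 k.

Lemma vertexE (k j : 'I_n) : vertex k ord0 j = (j == k)%:R.
Proof. by rewrite mxE. Qed.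

Lemma simplex_vertex (k : 'I_n) : simplex n (vertex k).
Proof.
split=> [j|]; first by rewrite vertexE ler0n.
rewrite (bigD1 k) //= big1 ?vertexE ?eqxx ?addr0 // => j /negbTE jk.
by rewrite vertexE jk.
Qed.

Lemma dot_vertex (k : 'I_n) x : dot (vertex k) x = x ord0 k.
Proof.
rewrite /dot (bigD1 k) //= big1 ?vertexE ?eqxx ?mul1r ?addr0 // => j /negbTE jk.
by rewrite vertexE jk mul0r.
Qed.

End Simplex.
Arguments vertex {R n}.

Section Experiments.
Variables (R : realType) (n : nat) (mu : 'rV[R]_n).
Hypothesis mu_int : rel_interior n mu.

Let mu_gt0 th : 0 < mu ord0 th.
Proof. by case: mu_int => _; apply. Qed.

Lemma splitting_experiment m (p : 'I_m -> R) (xs : 'I_m -> 'rV[R]_n) :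
  (forall s, 0 < p s) -> (forall s, simplex n (xs s)) ->
  \sum_s p s *: xs s = mu ->
  exists pi, [/\ experiment pi, sigprob mu pi = p & post mu pi = xs].
Proof.
move=> p_gt0 xs_simplex p_mean.
have mu_th th : \sum_s p s * xs s ord0 th = mu ord0 th.
  by rewrite -p_mean summxE; apply: eq_bigr => s _; rewrite mxE.
pose pi th s := p s * xs s ord0 th / mu ord0 th.
have sig s : sigprob mu pi s = p s.
  rewrite /sigprob (eq_bigr (fun th => p s * xs s ord0 th)).
    by rewrite -mulr_sumr (proj2 (xs_simplex s)) mulr1.
  by move=> th _; rewrite mulrC divfK // gt_eqF.
exists pi; split; first split.
- move=> th s; rewrite divr_ge0 ?mulr_ge0 ?(ltW (mu_gt0 th)) ?(ltW (p_gt0 s)) //.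
  exact: (proj1 (xs_simplex s)).
- by move=> th; rewrite -mulr_suml mu_th divff // gt_eqF.
- exact/funext.
- apply/funext => s; apply/rowP => th; rewrite /post mxE sig /pi.
  by rewrite [mu _ _ * _]mulrC divfK ?gt_eqF // mulrC mulKf // gt_eqF.
Qed.

Lemma prior_split y : simplex n y ->
  exists q z, [/\ 0 < q < 1, simplex n z & mu = q *: y + (1 - q) *: z].
Proof.
move=> [y_ge0 y_sum].
pose S := \sum_th (mu ord0 th)^-1.
have S_ge : forall th, (mu ord0 th)^-1 <= S.
  by move=> th; rewrite /S (bigD1 th) //= lerDl sumr_ge0 // => i _; rewrite invr_ge0 ltW.
have S_ge0 : 0 <= S by rewrite sumr_ge0 // => th _; rewrite invr_ge0 ltW.
pose q := (2 + S)^-1.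
have q_gt0 : 0 < q by rewrite invr_gt0; lra.
have q_lt1 : q < 1 by rewrite invf_lt1; lra.
have q_le_mu th : q <= mu ord0 th.
  rewrite -[mu _ _]invrK lef_pV2 ?posrE ?invr_gt0 //; last lra.
  by have := S_ge th; lra.
have q1_neq0 : 1 - q != 0 by rewrite subr_eq0 gt_eqF.
exists q, ((1 - q)^-1 *: (mu - q *: y)); split.
- by rewrite q_gt0 q_lt1.
- split=> [th|].
    rewrite !mxE mulr_ge0 // ?invr_ge0 ?subr_ge0 ?(ltW q_lt1) //.
    have /andP[_ y_le1] := simplex_coord th (conj y_ge0 y_sum).
    by have := q_le_mu th; have := y_ge0 th; nra.
  under eq_bigr do rewrite !mxE.
  rewrite -mulr_sumr sumrB -mulr_sumr y_sum (proj2 (proj1 mu_int)) mulr1.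
  by rewrite mulVf.
- by rewrite scalerA mulfV // scale1r addrC subrK.
Qed.

End Experiments.

Lemma mpc_merge (R : realType) (n : nat) (q r lam : R) (a b z : 'rV[R]_n) :
  0 <= q -> 0 <= r -> 0 <= lam <= 1 ->
  mpc (fun s : 'I_3 => [:: q * lam; q * (1 - lam); r]`_s) (fun s => [:: a; b; z]`_s)
      (fun s : 'I_2 => [:: q; r]`_s) (fun s => [:: lam *: a + (1 - lam) *: b; z]`_s).
Proof.
move=> q_ge0 r_ge0 /andP[lam_ge0 lam_le1].
exists (fun (i : 'I_3) (j : 'I_2) =>
  if (val i == 2%N) == (val j == 1%N) then [:: q * lam; q * (1 - lam); r]`_i else 0).
split.
- move=> [[|[|[|?]]] ?] [[|[|?]] ?] //=; rewrite ?mulr_ge0 ?subr_ge0 //.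
- by move=> [[|[|[|?]]] ?]; rewrite //= !big_ord_recl big_ord0 /= ?addr0 ?add0r.
- move=> [[|[|?]] ?]; rewrite //= !big_ord_recl big_ord0 /= ?addr0 ?add0r //.
  by rewrite -mulrDr addrC subrK mulr1.
- move=> [[|[|?]] ?]; rewrite //= !big_ord_recl big_ord0 /= ?scale0r ?addr0 ?add0r //.
  by rewrite scalerDr !scalerA.
Qed.

Section SwitchPayoff.
Variables (R : realType) (n : nat) (mu : 'rV[R]_n) (phi : 'rV[R]_n -> 'rV[R]_n).
Hypothesis mu_int : rel_interior n mu.
Hypothesis phi_blackwell : respects_blackwell mu phi.

Definition switch_payoff (w x : 'rV[R]_n) : R :=
  if 0 < dot w (phi x) then dot w x else 0.

Lemma switch_payoff_blackwell w m m' (pi : 'I_n -> 'I_m -> R)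
    (pi' : 'I_n -> 'I_m' -> R) :
  experiment pi -> experiment pi' -> blackwell_ge mu pi pi' ->
  \sum_s sigprob mu pi' s * switch_payoff w (post mu pi' s) <=
  \sum_s sigprob mu pi s * switch_payoff w (post mu pi s).
Proof.
pose A : set R := [set 0; 1].
pose u (a : R) th := a * w ord0 th.
pose astar y : R := if 0 < dot w y then 1 else 0.
have util y a : exp_util u y a = a * dot w y.
  rewrite /exp_util /dot mulr_sumr; apply: eq_bigr => th _; rewrite /u; ring.
have exp_W_switch k (p : 'I_n -> 'I_k -> R) : exp_W u astar phi mu p =
    \sum_s sigprob mu p s * switch_payoff w (post mu p s).
  apply: eq_bigr => s _; rewrite /Wval util /astar /switch_payoff.
  by case: ifP; rewrite ?mul1r ?mul0r.
have A_compact : compact A.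
  by apply: finite_compact; rewrite finite_setU; split; exact: finite_set1.
have u_cont th : {within A, continuous (u^~ th)}.
  apply: continuous_subspaceT => a.
  by apply: continuousM; [exact: cvg_id | exact: cst_continuous].
have astar_opt : consistent_choice A u astar.
  move=> y _; split; first by rewrite /astar; case: ifP => _; [right | left].
  move=> a; rewrite !util /astar.
  by case: ltP => [/ltW|] w_y [->|->]; rewrite ?mul0r ?mul1r ?lexx.
move=> pi_exp pi'_exp pi_pi'; rewrite -!exp_W_switch.
exact: (phi_blackwell A_compact u_cont astar_opt pi_exp pi'_exp pi_pi').
Qed.

Lemma switch_payoff_convex w a b (lam : R) :
  simplex n a -> simplex n b -> 0 < lam < 1 ->
  switch_payoff w (lam *: a + (1 - lam) *: b) <=
  lam * switch_payoff w a + (1 - lam) * switch_payoff w b.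
Proof.
move=> a_simplex b_simplex /andP[lam_gt0 lam_lt1].
set y := lam *: a + _.
have y_simplex : simplex n y by apply: simplex_convex => //; rewrite !ltW.
have [q [z [/andP[q_gt0 q_lt1] z_simplex mu_split]]] := prior_split mu_int y_simplex.
pose p3 (s : 'I_3) := [:: q * lam; q * (1 - lam); 1 - q]`_s.
pose x3 (s : 'I_3) := [:: a; b; z]`_s.
pose p2 (s : 'I_2) := [:: q; 1 - q]`_s.
pose x2 (s : 'I_2) := [:: y; z]`_s.
have [pi3 [pi3_exp pi3_sig pi3_post]] : exists pi3,
    [/\ experiment pi3, sigprob mu pi3 = p3 & post mu pi3 = x3].
  apply: splitting_experiment => //.
  - by move=> [[|[|[|?]]] ?]; rewrite //= ?mulr_gt0 ?subr_gt0.
  - by move=> [[|[|[|?]]] ?].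
  - rewrite mu_split !big_ord_recl big_ord0 /= addr0 /y scalerDr !scalerA.
    by rewrite addrA.
have [pi2 [pi2_exp pi2_sig pi2_post]] : exists pi2,
    [/\ experiment pi2, sigprob mu pi2 = p2 & post mu pi2 = x2].
  apply: splitting_experiment => //.
  - by move=> [[|[|?]] ?]; rewrite //= subr_gt0.
  - by move=> [[|[|?]] ?].
  - by rewrite mu_split !big_ord_recl big_ord0 /= addr0.
have garbling : blackwell_ge mu pi3 pi2.
  by rewrite /blackwell_ge pi3_sig pi3_post pi2_sig pi2_post; apply: mpc_merge;
    rewrite ?subr_ge0 ?ltW.
have := switch_payoff_blackwell w pi3_exp pi2_exp garbling.
rewrite pi3_sig pi3_post pi2_sig pi2_post !big_ord_recl !big_ord0.
rewrite /p3 /x3 /p2 /x2 /= => payoff_le.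
rewrite -(ler_pM2l q_gt0); lra.
Qed.

End SwitchPayoff.

Section Crossing.
Variables (R : realType) (n : nat) (mu : 'rV[R]_n) (phi : 'rV[R]_n -> 'rV[R]_n).
Hypothesis mu_int : rel_interior n mu.
Hypothesis phi_simplex : forall x, simplex n x -> simplex n (phi x).
Hypothesis phi_blackwell : respects_blackwell mu phi.
Hypothesis phi_cont : {within simplex n, continuous phi}.

Lemma closed_dot_ge0 (w : 'rV[R]_n) : closed [set y | 0 <= dot w y].
Proof.
exact: (proj1 (continuous_closedP _) (@continuous_dot R n w) _ (@closed_ge _ 0)).
Qed.

Lemma segment_limit (S : set 'rV[R]_n) z e :
  closed S -> simplex n z -> simplex n e ->
  (forall t, 0 < t <= 1 -> S (phi (t *: e + (1 - t) *: z))) -> S (phi z).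
Proof.
move=> S_closed z_simplex e_simplex S_seg.
pose g t := t *: e + (1 - t) *: z.
have g_cvg : g t @[t --> 0^'+] --> z.
  have g_cont : g t @[t --> 0] --> g 0.
    apply: cvgD; apply: cvgZr_tmp; first exact: cvg_id.
    by apply: cvgB; [exact: cvg_cst | exact: cvg_id].
  have -> : z = g 0 by rewrite /g scale0r add0r subr0 scale1r.
  exact: cvg_within_filter g_cont.
have near_seg : \forall t \near 0^'+, simplex n (g t) /\ 0 < t <= 1.
  near=> t.
  have t_gt0 : 0 < t by near: t; exact: nbhs_right_gt.
  have t_le1 : t <= 1 by near: t; exact: nbhs_right_le.
  by rewrite t_gt0 t_le1; split => //; apply: simplex_convex => //; rewrite ltW.
have g_within : g t @[t --> 0^'+] --> within (simplex n) (nbhs z).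
  move=> P /g_cvg P_near.
  by apply: filterS2 near_seg P_near => t [g_simplex _]; apply.
have phi_z : phi @ within (simplex n) (nbhs z) --> phi z.
  by rewrite (nbhs_subspace_in z_simplex); exact: phi_cont.
have phi_g : (phi \o g) t @[t --> 0^'+] --> phi z := cvg_comp _ _ g_within phi_z.
apply: (closed_cvg S S_closed _ _ phi_g).
by move: near_seg; apply: filterS => t [_ /S_seg].
Unshelve. all: by end_near.
Qed.

Lemma crossing w x z : simplex n x -> simplex n z ->
  dot w x < 0 < dot w (phi x) -> dot w z < 0 -> 0 <= dot w (phi z).
Proof.
move=> x_simplex z_simplex /andP[wx_lt0 wphix_gt0] wz_lt0.
apply: (segment_limit (@closed_dot_ge0 w) z_simplex x_simplex).
move=> t /andP[t_gt0].
set p := t *: x + _; rewrite /= le_eqVlt => /orP[/eqP t1|t_lt1].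
  by rewrite /p t1 subrr scale0r addr0 scale1r ltW.
(* The switch payoff is convex on [[z, x]], negative at [x] and nonpositive at
   [z], hence negative at [p]: the decision maker must act there. *)
suff : switch_payoff phi w p < 0.
  by rewrite /switch_payoff; case: ifP => [/ltW ? _|_]; rewrite ?ltxx.
have payoff_x : switch_payoff phi w x = dot w x by rewrite /switch_payoff wphix_gt0.
have payoff_z : switch_payoff phi w z <= 0.
  by rewrite /switch_payoff; case: ifP => // _; exact: ltW.
apply: le_lt_trans (switch_payoff_convex mu_int phi_blackwell w x_simplex z_simplex _) _.
  by rewrite t_gt0 t_lt1.
have : t * dot w x < 0 by rewrite pmulr_rlt0.
have : (1 - t) * switch_payoff phi w z <= 0 by rewrite pmulr_rle0 // subr_gt0.
by rewrite payoff_x; lra.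
Qed.

Lemma crossing_affine w (c : R) x z : simplex n x -> simplex n z ->
  dot w x + c < 0 < dot w (phi x) + c -> dot w z + c < 0 ->
  0 <= dot w (phi z) + c.
Proof.
move=> x_simplex z_simplex.
have := @crossing (w + c *: const_mx 1) x z x_simplex z_simplex.
by rewrite !(dot_add_const _ _ x_simplex, dot_add_const _ _ z_simplex,
  dot_add_const _ _ (phi_simplex x_simplex), dot_add_const _ _ (phi_simplex z_simplex)).
Qed.

End Crossing.

Lemma exists_between2 (R : realFieldType) (u v a : R) :
  u < a -> v < a -> exists c, [/\ u < c, v < c & c < a].
Proof.
move=> ua va; have [uv|vu] := leP u v.
  by exists ((v + a) / 2); split; lra.
by exists ((u + a) / 2); split; lra.
Qed.

Section CoordinateCrossing.
Variables (R : realType) (n : nat) (mu : 'rV[R]_n) (phi : 'rV[R]_n -> 'rV[R]_n).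
Hypothesis mu_int : rel_interior n mu.
Hypothesis phi_simplex : forall x, simplex n x -> simplex n (phi x).
Hypothesis phi_blackwell : respects_blackwell mu phi.
Hypothesis phi_cont : {within simplex n, continuous phi}.
Variable i : 'I_n.

Let cross := crossing_affine mu_int phi_simplex phi_blackwell phi_cont.

Lemma crossing_up (c : R) x z : simplex n x -> simplex n z ->
  x ord0 i < c < phi x ord0 i -> z ord0 i < c -> c <= phi z ord0 i.
Proof.
move=> x_simplex z_simplex /andP[x_lt_c c_lt_phix] z_lt_c.
have := cross (w := vertex i) (c := - c) x_simplex z_simplex.
by rewrite !dot_vertex subr_ge0 !subr_lt0 subr_gt0 x_lt_c c_lt_phix; apply.
Qed.

Lemma crossing_down (c : R) x z : simplex n x -> simplex n z ->
  phi x ord0 i < c < x ord0 i -> c < z ord0 i -> phi z ord0 i <= c.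
Proof.
move=> x_simplex z_simplex /andP[phix_lt_c c_lt_x] c_lt_z.
have := cross (w := - vertex i) (c := c) x_simplex z_simplex.
rewrite !dotNl !dot_vertex !(addrC (- _)) subr_ge0 !subr_lt0 subr_gt0.
by rewrite c_lt_x phix_lt_c; apply.
Qed.

Let b := phi (vertex i) ord0 i.

Let vertex_ii : vertex i ord0 i = 1 :> R.
Proof. by rewrite vertexE eqxx. Qed.

Let ei_simplex : simplex n (vertex i) := simplex_vertex R i.

Lemma phi_coord_above x : simplex n x -> b < x ord0 i -> phi x ord0 i = b.
Proof.
move=> x_simplex b_lt_x; have /andP[_ x_le1] := simplex_coord i x_simplex.
apply/eqP; rewrite eq_le; apply/andP; split; rewrite leNgt; apply/negP.
- move=> b_lt_phix.
  have [c' [x_lt_c' phix_lt_c' c'_lt_b]] :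
      exists c', [/\ - x ord0 i < c', - phi x ord0 i < c' & c' < - b].
    by apply: exists_between2; lra.
  have : phi x ord0 i <= - c'.
    apply: (crossing_down ei_simplex x_simplex); rewrite ?vertex_ii; last lra.
    by rewrite -/b; apply/andP; split; lra.
  lra.
- move=> phix_lt_b; pose c := (b + phi x ord0 i) / 2.
  have : b <= c.
    apply: (crossing_down x_simplex ei_simplex); rewrite ?vertex_ii /c; last lra.
    by apply/andP; split; lra.
  by rewrite /c; lra.
Qed.

Variable j : 'I_n.
Hypothesis ij : i != j.

Let a := phi (vertex j) ord0 i.

Let vertex_ji : vertex j ord0 i = 0 :> R.
Proof. by rewrite vertexE (negbTE ij). Qed.

Let ej_simplex : simplex n (vertex j) := simplex_vertex R j.

Lemma phi_coord_below x : simplex n x -> x ord0 i < a -> phi x ord0 i = a.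
Proof.
move=> x_simplex x_lt_a; have /andP[x_ge0 _] := simplex_coord i x_simplex.
apply/eqP; rewrite eq_le; apply/andP; split; rewrite leNgt; apply/negP.
- move=> a_lt_phix; pose c := (a + phi x ord0 i) / 2.
  have : c <= a.
    apply: (crossing_up x_simplex ej_simplex); rewrite ?vertex_ji /c; last lra.
    by apply/andP; split; lra.
  by rewrite /c; lra.
- move=> phix_lt_a.
  have [c [x_lt_c phix_lt_c c_lt_a]] := exists_between2 x_lt_a phix_lt_a.
  have : c <= phi x ord0 i.
    by apply: (crossing_up ej_simplex x_simplex); rewrite // vertex_ji c_lt_a; lra.
  lra.
Qed.

Lemma phi_coord_between x : simplex n x -> a <= x ord0 i <= b -> phi x ord0 i = x ord0 i.
Proof.
move=> x_simplex /andP[a_le_x x_le_b].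
have /andP[x_ge0 x_le1] := simplex_coord i x_simplex.
apply/eqP; rewrite eq_le; apply/andP; split; rewrite leNgt; apply/negP => x_phix;
  pose c := (x ord0 i + phi x ord0 i) / 2.
- have : c <= a.
    apply: (crossing_up x_simplex ej_simplex); rewrite ?vertex_ji /c; last lra.
    by apply/andP; split; lra.
  by rewrite /c; lra.
- have : b <= c.
    apply: (crossing_down x_simplex ei_simplex); rewrite ?vertex_ii /c; last lra.
    by apply/andP; split; lra.
  by rewrite /c; lra.
Qed.

Lemma phi_coord_bounds : [/\ 0 <= a, a <= b & b <= 1].
Proof.
have /andP[a_ge0 a_le1] : 0 <= a <= 1 := simplex_coord i (phi_simplex ej_simplex).
have /andP[b_ge0 b_le1] : 0 <= b <= 1 := simplex_coord i (phi_simplex ei_simplex).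
split => //; rewrite leNgt; apply/negP => b_lt_a.
pose m := (a + b) / 2.
set x := m *: vertex i + (1 - m) *: vertex j.
have x_simplex : simplex n x.
  by apply: simplex_convex => //; apply/andP; split; rewrite /m; lra.
have x_i : x ord0 i = m.
  by rewrite !mxE !eqxx (negbTE ij) /= mulr1 mulr0 addr0.
have : a = b.
  by rewrite -(phi_coord_below x_simplex) ?(phi_coord_above x_simplex) // x_i /m; lra.
lra.
Qed.

End CoordinateCrossing.

Section Gram.
Variables (R : realType) (n : nat).
Implicit Types (X Y W : 'rV[R]_n).

Definition gram2 X Y := dot X X * dot Y Y - dot X Y ^+ 2.

Lemma gram2_eq0 X Y : X != 0 -> gram2 X Y = 0 -> Y = (dot X Y / dot X X) *: X.
Proof.
move=> X_neq0 gram0; have XX_neq0 : dot X X != 0 by rewrite dot_eq0.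
set k := dot X Y / dot X X.
have : dot X X * dot (Y - k *: X) (Y - k *: X) = gram2 X Y.
  by rewrite /gram2 !dotBl !dotBr !dotZl !dotZr (dotC Y X) /k; field.
rewrite gram0 => /eqP; rewrite mulf_eq0 (negbTE XX_neq0) dot_eq0 subr_eq0.
by move=> /eqP.
Qed.

Lemma gram2_scale_add X Y (s t : R) :
  gram2 X (s *: X + t *: Y) = t ^+ 2 * gram2 X Y.
Proof. by rewrite /gram2 !dotDl !dotDr !dotZl !dotZr (dotC Y X); ring. Qed.

Lemma gram2_dual X Y (s t : R) : gram2 X Y != 0 ->
  exists a b, dot (a *: X + b *: Y) X = s /\ dot (a *: X + b *: Y) Y = t.
Proof.
move=> gram_neq0.
exists ((s * dot Y Y - t * dot X Y) / gram2 X Y),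
       ((t * dot X X - s * dot X Y) / gram2 X Y).
by rewrite !dotDl !dotZl (dotC Y X); split; move: gram_neq0; rewrite /gram2 => ?; field.
Qed.

Lemma span2_or_separate X Y W : gram2 X Y != 0 ->
  (exists a b, W = a *: X + b *: Y) \/
  (forall r, exists v, [/\ dot v X = 0, dot v Y = 0 & dot v W = r]).
Proof.
move=> gram_neq0.
have [a [b [PX PY]]] := gram2_dual (dot W X) (dot W Y) gram_neq0.
set P := a *: X + b *: Y in PX PY.
have [W_eq|W_neq] := eqVneq W P; [by left; exists a, b | right => r].
have QX : dot (W - P) X = 0 by rewrite dotBl PX subrr.
have QY : dot (W - P) Y = 0 by rewrite dotBl PY subrr.
have QQ_neq0 : dot (W - P) (W - P) != 0 by rewrite dot_eq0 subr_eq0.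
have QW : dot (W - P) W = dot (W - P) (W - P).
  by rewrite [in RHS]dotBr /P dotDr !dotZr QX QY !mulr0 addr0 subr0.
exists ((r / dot (W - P) (W - P)) *: (W - P)).
by rewrite !dotZl QX QY QW !mulr0 divfK.
Qed.

End Gram.

Lemma coefs_eq0 (R : realFieldType) (a b : R) :
  (forall s t, s < 1 -> t < 1 -> a * s + b * t <= 1) ->
  (forall s t, s < -1 -> t < -1 -> -1 <= a * s + b * t) ->
  a = 0 /\ b = 0.
Proof.
move=> upper lower.
have coef_ge0 (c : R) : (forall s, s < 1 -> c * s <= 1) -> 0 <= c.
  move=> c_upper; rewrite leNgt; apply/negP => c_lt0.
  have : 2 / c < 1 by rewrite (lt_trans _ ltr01) // pmulr_rlt0 ?invr_lt0.
  by move/c_upper; rewrite mulrC divfK ?lt_eqF //; lra.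
have a_ge0 : 0 <= a by apply: coef_ge0 => s /(upper s 0); rewrite mulr0 addr0; apply.
have b_ge0 : 0 <= b by apply: coef_ge0 => t /(upper 0 t); rewrite mulr0 add0r; apply.
suff : a + b <= 0 by lra.
rewrite leNgt; apply/negP => ab_gt0; pose s := -1 - (a + b)^-1.
have s_lt : s < -1 by rewrite /s ltrBlDr ltrDl invr_gt0.
have := lower s s s_lt s_lt.
have -> : a * s + b * s = - (a + b) - 1 by rewrite /s; field; rewrite gt_eqF.
lra.
Qed.

Lemma exists_vertex_off_line (R : realType) (n : nat) (X y0 : 'rV[R]_n) :
  (3 <= n)%N -> X != 0 -> exists k, gram2 X (vertex k - y0) != 0.
Proof.
move=> n_ge3 X_neq0; apply/existsP; apply: contraT; rewrite negb_exists.
move=> /forallP /(_ _) /negPn /eqP /(gram2_eq0 X_neq0) on_line.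
pose c k := dot X (vertex k - y0) / dot X X.
have coord k l : (k == l)%:R = y0 ord0 l + c k * X ord0 l.
  by rewrite eq_sym -vertexE -(subrK y0 (vertex k)) on_line !mxE addrC.
pose k0 : 'I_n := Ordinal (ltnW (ltnW n_ge3)).
pose k1 : 'I_n := Ordinal (ltnW n_ge3).
pose k2 : 'I_n := Ordinal n_ge3.
have := coord k0 k1; have := coord k1 k1; have := coord k0 k2.
have := coord k1 k2; have := coord k2 k2; rewrite !eqxx /= => e22 e12 e02 e11 e01.
have : (c k2 - c k0) * X ord0 k2 = 1 by lra.
have /eqP : (c k1 - c k0) * X ord0 k2 = 0 by lra.
rewrite mulf_eq0 => /orP[/eqP c10|/eqP ->].
  by move: e11; rewrite (subr0_eq c10); lra.
by rewrite mulr0 => /eqP; rewrite eq_sym oner_eq0.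
Qed.

Section ManyStates.
Variables (R : realType) (n : nat) (mu : 'rV[R]_n) (phi : 'rV[R]_n -> 'rV[R]_n).
Hypothesis mu_int : rel_interior n mu.
Hypothesis phi_simplex : forall x, simplex n x -> simplex n (phi x).
Hypothesis phi_blackwell : respects_blackwell mu phi.
Hypothesis phi_cont : {within simplex n, continuous phi}.

Lemma phi_eq_off_line x0 z : simplex n x0 -> simplex n z ->
  gram2 (x0 - phi x0) (z - phi x0) != 0 -> phi z = phi x0.
Proof.
move=> x0_simplex z_simplex gram_neq0.
set y0 := phi x0 in gram_neq0 *; set X := x0 - y0 in gram_neq0 *.
set Z := z - y0 in gram_neq0 *; pose W := phi z - y0.
have cross v (k : R) x x' : simplex n x -> simplex n x' ->
    dot v (x - y0) + k < 0 < dot v (phi x - y0) + k -> dot v (x' - y0) + k < 0 ->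
    0 <= dot v (phi x' - y0) + k.
  have shift (u : 'rV[R]_n) : dot v (u - y0) + k = dot v u + (k - dot v y0).
    by rewrite dotBr; ring.
  rewrite !shift; exact: (crossing_affine mu_int phi_simplex phi_blackwell phi_cont).
have lower v : dot v X < -1 -> dot v Z < -1 -> -1 <= dot v W.
  move=> vX vZ; have := cross v 1 x0 z x0_simplex z_simplex.
  rewrite subrr dot0r add0r ltr01 andbT -/X -/Z -/W; lra.
have upper v : dot v X < 1 -> dot v Z < 1 -> dot v W <= 1.
  move=> vX vZ; rewrite leNgt; apply/negP => vW.
  have := cross v (-1) z x0 z_simplex x0_simplex.
  rewrite subrr dot0r add0r -/X -/Z -/W; lra.
case: (span2_or_separate W gram_neq0) => [[a [b W_ab]]|separate]; last first.
  exfalso; have [v [vX vZ vW]] := separate 2.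
  by have := upper v; rewrite vX vZ vW; lra.
have [a0 b0] : a = 0 /\ b = 0.
  have dotW s t : exists v, [/\ dot v X = s, dot v Z = t & dot v W = a * s + b * t].
    have [a' [b' [vX vZ]]] := gram2_dual s t gram_neq0.
    by exists (a' *: X + b' *: Z); split => //; rewrite W_ab dotDr !dotZr vX vZ.
  apply: coefs_eq0 => s t s_lt t_lt; have [v [vX vZ <-]] := dotW s t.
    by apply: upper; rewrite ?vX ?vZ.
  by apply: lower; rewrite ?vX ?vZ.
by apply/eqP; rewrite -subr_eq0 -/W W_ab a0 b0 !scale0r addr0.
Qed.

Lemma phi_const_of_moved x0 : (3 <= n)%N -> simplex n x0 -> phi x0 != x0 ->
  forall z, simplex n z -> phi z = phi x0.
Proof.
move=> n_ge3 x0_simplex x0_moved z z_simplex.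
set y0 := phi x0; have X_neq0 : x0 - y0 != 0 by rewrite subr_eq0 eq_sym.
have [/(gram2_eq0 X_neq0)|] := eqVneq (gram2 (x0 - y0) (z - y0)) 0; last first.
  exact: phi_eq_off_line.
set k := _ / _ => z_on_line.
have [l l_off] := exists_vertex_off_line y0 n_ge3 X_neq0.
have l_simplex := simplex_vertex R l.
apply: (segment_limit phi_cont (S := [set y0]) _ z_simplex l_simplex).
  by apply: accessible_closed_set1; apply: hausdorff_accessible; exact: norm_hausdorff.
move=> t /andP[t_gt0 t_le1]; apply: phi_eq_off_line => //.
  by apply: simplex_convex; rewrite // ltW.
have -> : t *: vertex l + (1 - t) *: z - y0 =
    ((1 - t) * k) *: (x0 - y0) + t *: (vertex l - y0).
  by rewrite -scalerA -z_on_line; apply/rowP => i; rewrite !mxE; ring.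
by rewrite gram2_scale_add mulf_neq0 // expf_neq0 // gt_eqF.
Qed.

End ManyStates.

Theorem mainTheorem14 (R : realType) (n : nat) (mu : 'rV[R]_n)
  (phi : 'rV[R]_n -> 'rV[R]_n) :
  (2 <= n)%N ->
  rel_interior n mu ->
  (forall x, simplex n x -> simplex n (phi x)) ->
  respects_blackwell mu phi ->
  {within simplex n, continuous phi} ->
  ((3 <= n)%N ->
     (exists xstar, simplex n xstar /\
        forall x, simplex n x -> phi x = xstar)
     \/ (forall x, simplex n x -> phi x = x))
  /\
  (n = 2%N ->
     exists a b : R, [/\ 0 <= a, a <= b, b <= 1 &
       forall (i : 'I_n), nat_of_ord i = 1%N ->
       forall x, simplex n x ->
         [/\ x ord0 i < a -> phi x ord0 i = a,
             a <= x ord0 i <= b -> phi x ord0 i = x ord0 i &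
             b < x ord0 i -> phi x ord0 i = b]]).
Proof.
move=> n_ge2 mu_int phi_simplex phi_blackwell phi_cont; split => [n_ge3|_].
  have [[x0 [x0_simplex x0_moved]]|no_moved] :=
    pselect (exists x0, simplex n x0 /\ phi x0 != x0).
    left; exists (phi x0); split; first exact: phi_simplex.
    exact: (phi_const_of_moved mu_int phi_simplex phi_blackwell phi_cont
      n_ge3 x0_simplex).
  right => x x_simplex; apply/eqP; apply: contra_notT no_moved => x_moved.
  by exists x.
pose i1 : 'I_n := Ordinal n_ge2; pose i0 : 'I_n := Ordinal (ltnW n_ge2).
have i1_i0 : i1 != i0 by [].
exists (phi (vertex i0) ord0 i1), (phi (vertex i1) ord0 i1).
have [a_ge0 a_le_b b_le1] :=
  phi_coord_bounds mu_int phi_simplex phi_blackwell phi_cont i1_i0.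
split => // i /eqP i_eq1 x x_simplex; have -> : i = i1 by apply/val_inj/eqP.
split.
- exact: (phi_coord_below mu_int phi_simplex phi_blackwell phi_cont i1_i0 x_simplex).
- exact: (phi_coord_between mu_int phi_simplex phi_blackwell phi_cont i1_i0 x_simplex).
- exact: (phi_coord_above mu_int phi_simplex phi_blackwell phi_cont x_simplex).
Qed.
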